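(* Let $\mathcal H$ be the $5$-uniform hypergraph defined below, let $e,f$ be two edges of $\mathcal{H}$, and let $\phi : V(\mathcal{H}_{ef}) \to V(\mathcal{H})$ be a monomorphism. If $\phi(e') = e'$ for every edge $e' \in \mathcal{H}_{ef}$, then $\phi$ is the identity.
   Context: $\mathcal{H}$ has vertex set $\{z, v_1,\dots,v_9\}$ and edges $r=\{z,v_1,v_3,v_5,v_8\}$, $g=\{z,v_2,v_4,v_7,v_9\}$, $a=\{v_1,v_4,v_6,v_8,v_9\}$, $b=\{v_9,v_1,v_2,v_3,v_4\}$, and $e_i=\{v_i,v_{i+1},v_{i+2},v_{i+3},v_{i+4}\}$ for $i=1,\dots,5$. $\mathcal{H}_{ef}$ is the hypergraph with edge set $E(\mathcal H)\setminus\{e,f\}$, and $V(\mathcal H_{ef})$ is the union of its edges. A monomorphism $\phi: V(\mathcal{H}_{ef})\to V(\mathcal{H})$ is an injective map such that $\phi(x):=\{\phi(y): y\in x\}$ is an edge of $\mathcal H$ for every edge $x$ of $\mathcal H_{ef}$; ''identity'' means $\phi(y)=y$ for all $y\in V(\mathcal H_{ef})$. *)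

From mathcomp Require Import all_boot.
Set Implicit Arguments. Unset Strict Implicit. Unset Printing Implicit Defensive.

(* Vertices of H: 'I_10, with z = 0 and v_i = i (1 <= i <= 9). *)
Definition Vtx := 'I_10.
Definition vx (i : nat) : Vtx := inord i.
Definition z : Vtx := vx 0.

Definition edge_of (s : seq nat) : {set Vtx} := [set x in map vx s].

Definition r_edge : {set Vtx} := z |: edge_of [:: 1; 3; 5; 8].
Definition g_edge : {set Vtx} := z |: edge_of [:: 2; 4; 7; 9].
Definition a_edge : {set Vtx} := edge_of [:: 1; 4; 6; 8; 9].
Definition b_edge : {set Vtx} := edge_of [:: 9; 1; 2; 3; 4].
Definition e_edge (i : nat) : {set Vtx} := edge_of [:: i; i+1; i+2; i+3; i+4].

Definition EH : {set {set Vtx}} :=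
  [set r_edge; g_edge; a_edge; b_edge;
       e_edge 1; e_edge 2; e_edge 3; e_edge 4; e_edge 5].

Definition E_ef (e f : {set Vtx}) : {set {set Vtx}} := EH :\: [set e; f].

Definition V_ef (e f : {set Vtx}) : {set Vtx} := \bigcup_(x in E_ef e f) x.

(* phi : V(H_ef) -> V(H) is a monomorphism (only values on V(H_ef) matter) *)
Definition monomorphism (e f : {set Vtx}) (phi : Vtx -> Vtx) : Prop :=
  {in V_ef e f &, injective phi} /\
  (forall x, x \in E_ef e f -> phi @: x \in EH).

(** Since [phi] maps every edge of [H_ef] onto itself and is injective, [phi y]
    lies in exactly the same edges of [H_ef] as [y]. But already after deleting
    any two edges, the remaining edges of [H] separate the vertices they cover:
    no two distinct covered vertices lie in the same remaining edges. Hence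
    [phi y = y]. The separation property is checked by computation on the lists
    of vertex labels of the edges. *)

From mathcomp Require Import all_boot.

Set Implicit Arguments.
Unset Strict Implicit.
Unset Printing Implicit Defensive.

Definition separating (T : finType) (E : {set {set T}}) : Prop :=
  {in \bigcup_(x in E) x, forall y y',
    (forall x, x \in E -> (y \in x) = (y' \in x)) -> y = y'}.

Section EdgewiseFixedMaps.

Variables (T : finType) (E : {set {set T}}) (phi : T -> T).
Hypothesis phi_inj : {in \bigcup_(x in E) x &, injective phi}.
Hypothesis phi_fix : {in E, forall x : {set T}, phi @: x = x}.

Lemma mem_edgewise_fixed x y :
  x \in E -> y \in \bigcup_(x in E) x -> (phi y \in x) = (y \in x).
Proof.
move=> Ex Vy; rewrite -{1}(phi_fix Ex).
apply/imsetP/idP => [[w wx /phi_inj eq_yw] | yx]; last by exists y.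
by rewrite eq_yw //; apply/bigcupP; exists x.
Qed.

Lemma edgewise_fixed_separating :
  separating E -> {in \bigcup_(x in E) x, forall y, phi y = y}.
Proof.
move=> sepE y Vy; have [x Ex yx] := bigcupP Vy.
have Vphiy : phi y \in \bigcup_(x in E) x.
  by apply/bigcupP; exists x; rewrite ?mem_edgewise_fixed.
by apply: sepE => // x' Ex'; rewrite mem_edgewise_fixed.
Qed.

End EdgewiseFixedMaps.

Lemma val_vx n : n < 10 -> val (vx n) = n.
Proof. exact: inordK. Qed.

Lemma mem_edge_of (y : Vtx) s :
  all (fun n => n < 10) s -> (y \in edge_of s) = (val y \in s).
Proof.
rewrite inE; elim: s => [|n s IHs] //= /andP [n_lt s_lt].
by rewrite !in_cons IHs // -(inj_eq val_inj) val_vx.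
Qed.

Lemma edge_of_cons n s : edge_of (n :: s) = vx n |: edge_of s.
Proof. by apply/setP => y; rewrite !inE. Qed.

Lemma eq_edge_of (s t : seq nat) : s =i t -> edge_of s = edge_of t.
Proof. by move=> eq_st; apply/setP => y; rewrite !inE (eq_mem_map vx eq_st). Qed.

Lemma edge_of_sorted_inj s t :
  sorted ltn s -> sorted ltn t -> all (fun n => n < 10) s -> all (fun n => n < 10) t ->
  edge_of s = edge_of t -> s = t.
Proof.
move=> s_sorted t_sorted s_lt t_lt eq_st.
apply: (irr_sorted_eq ltn_trans ltnn) => // n.
have [n_lt | n_ge] := ltnP n 10.
  by have := congr1 (fun x : {set Vtx} => vx n \in x) eq_st; rewrite /= !mem_edge_of // val_vx.
have notin u : all (fun n => n < 10) u -> n \in u = false.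
  by move=> /allP u_lt; apply/negbTE/negP => /u_lt; rewrite ltnNge n_ge.
by rewrite !notin.
Qed.

Definition edge_lists : seq (seq nat) :=
  [:: [:: 0; 1; 3; 5; 8]; [:: 0; 2; 4; 7; 9]; [:: 1; 4; 6; 8; 9]; [:: 1; 2; 3; 4; 9];
      [:: 1; 2; 3; 4; 5]; [:: 2; 3; 4; 5; 6]; [:: 3; 4; 5; 6; 7]; [:: 4; 5; 6; 7; 8];
      [:: 5; 6; 7; 8; 9]].

Lemma edge_lists_in_range : all (all (fun n => n < 10)) edge_lists.
Proof. by []. Qed.

Lemma EH_edge_lists : EH =i map edge_of edge_lists.
Proof.
have b_perm : perm_eq [:: 9; 1; 2; 3; 4] [:: 1; 2; 3; 4; 9] by [].
move=> x; rewrite /EH /r_edge /g_edge /b_edge (eq_edge_of (perm_mem b_perm)).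
by rewrite -!edge_of_cons !inE -!orbA.
Qed.

Lemma edge_of_edge_lists_inj : {in edge_lists &, injective edge_of}.
Proof.
have sorted_in_range : all (fun s => sorted ltn s && all (fun n => n < 10) s) edge_lists.
  by [].
move=> s t /(allP sorted_in_range) /andP [? ?] /(allP sorted_in_range) /andP [? ?].
exact: edge_of_sorted_inj.
Qed.

Lemma E_ef_edge_lists s t :
  s \in edge_lists -> t \in edge_lists ->
  E_ef (edge_of s) (edge_of t) =i map edge_of [seq u <- edge_lists | u \notin [:: s; t]].
Proof.
move=> Ls Lt x; rewrite /E_ef in_setD in_set2 EH_edge_lists.
apply/andP/mapP => [[x_ne /mapP [u Lu def_x]] | [u]].
  exists u => //; rewrite mem_filter Lu andbT !inE.
  by apply: contra x_ne => /orP [] /eqP u_eq; rewrite def_x u_eq eqxx ?orbT.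
rewrite mem_filter => /andP [u_notin Lu] ->; split; last exact: map_f.
by rewrite !(inj_in_eq edge_of_edge_lists_inj) // -mem_seq2.
Qed.

Definition lists_separate (L : seq (seq nat)) : bool :=
  all (fun n => all (fun n' =>
     has (fun u => n \in u) L && all (fun u => (n \in u) == (n' \in u)) L ==> (n == n'))
   (iota 0 10)) (iota 0 10).

Lemma separating_edge_of (E : {set {set Vtx}}) L :
  E =i map edge_of L -> all (all (fun n => n < 10)) L -> lists_separate L ->
  separating E.
Proof.
move=> EL L_lt sepL y /bigcupP [x Ex yx] y' same.
have [u Lu def_x] : exists2 u, u \in L & x = edge_of u by apply/mapP; rewrite -EL.
apply: val_inj; apply/eqP.
move: sepL => /allP /(_ (val y)); rewrite mem_iota ltn_ord => /(_ isT).
move=> /allP /(_ (val y')); rewrite mem_iota ltn_ord => /(_ isT) /implyP; apply.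
apply/andP; split.
  by apply/hasP; exists u; rewrite -?mem_edge_of ?(allP L_lt) -?def_x.
apply/allP => u' Lu'; have u'_lt := allP L_lt u' Lu'.
by rewrite -!mem_edge_of // same // EL map_f.
Qed.

Lemma edge_lists_separate :
  {in edge_lists &, forall s t, lists_separate [seq u <- edge_lists | u \notin [:: s; t]]}.
Proof.
have all_pairs : all (fun s => all (fun t =>
   lists_separate [seq u <- edge_lists | u \notin [:: s; t]]) edge_lists) edge_lists.
  by vm_compute.
by move=> s t /(allP all_pairs) /allP; apply.
Qed.

Lemma EH_separating : {in EH &, forall e f, separating (E_ef e f)}.
Proof.
move=> e f; rewrite !EH_edge_lists => /mapP [s Ls ->] /mapP [t Lt ->].
apply: separating_edge_of (E_ef_edge_lists Ls Lt) _ (edge_lists_separate Ls Lt).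
by rewrite all_filter; apply/allP => u Lu /=; rewrite (allP edge_lists_in_range) ?implybT.
Qed.

Theorem lemma4p4 (e f : {set Vtx}) (phi : Vtx -> Vtx) :
  e \in EH -> f \in EH -> e != f ->
  monomorphism e f phi ->
  (forall x, x \in E_ef e f -> phi @: x = x) ->
  {in V_ef e f, forall y, phi y = y}.
Proof.
move=> He Hf _ [phi_inj _] phi_fix.
exact: edgewise_fixed_separating phi_inj phi_fix (EH_separating He Hf).
Qed.
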